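(* Let $H$ be a non-cocommutative semisimple Hopf algebra over $k$ with a subgroup $G\subseteq G(H)$ of index $[H:kG]=2$, so that as a coalgebra $H\simeq kG\oplus M_d(k)^{\oplus n}$ with $d>1$, $|G|=d^2n$. Let $\Gamma\subseteq G$ be the common stabilizer, under left multiplication, of the irreducible characters of degree $d$, and write $H$, via the cocentral abelian exact sequence $k\to k^{\widehat\Gamma}\to H\to kF\to k$, as a bicrossed product $k^{\widehat\Gamma}\,{}^\tau\#_\sigma kF$ with cocycles $\sigma:F\times F\to(k^{\widehat\Gamma})^\times$ and $\tau:\widehat\Gamma\times\widehat\Gamma\to(k^F)^\times$, $\tau(s,t)=\sum_{y\in F}\tau_y(s,t)e_y$. Let $F_0=\{x\in F: [\tau_x]=1\}$. Then there is an exact sequence of groups $1\to\Gamma\to G\to F_0\to1$. In particular $|F_0|=n$.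
   Context: $k$ is an algebraically closed field of characteristic zero; $M_d(k)$ is the matrix coalgebra of dimension $d^2$. Irreducible characters of $H$ are characters of simple $H$-comodules viewed as elements of $H$. $\widehat\Gamma$ is the character group of the abelian group $\Gamma$, and $k\Gamma\cong k^{\widehat\Gamma}$ is a normal Hopf subalgebra with $H/H(k\Gamma)^+\cong kF$; the extension is cocentral, i.e. the matched-pair action of $\widehat\Gamma$ on $F$ is trivial, so each $\tau_x:\widehat\Gamma\times\widehat\Gamma\to k^\times$ is a normalized $2$-cocycle and $[\tau_x]$ is its class in $H^2(\widehat\Gamma,k^\times)$. The bicrossed product has multiplication $(e_s\#x)(e_t\#y)=\delta_{s\triangleleft x,t}\sigma_s(x,y)e_s\#xy$ and comultiplication $\Delta(e_s\#x)=\sum_{gh=s}\tau_x(g,h)e_g\#x\otimes e_h\#x$. *)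

(* Finite-dimensional Hopf algebras presented concretely on
   the coordinate space 'rV[k]_N with basis b_i = delta_mx 0 i;
   H (x) H is identified with 'M[k]_N (entry (i,j) = coefficient of b_i (x) b_j). *)
From HB Require Import structures.
From mathcomp Require Import all_boot all_order all_algebra all_fingroup.
From mathcomp Require Import boolp.
Set Implicit Arguments. Unset Strict Implicit. Unset Printing Implicit Defensive.
Import GRing.Theory.
Local Open Scope ring_scope.

Section Hopf.
Variables (k : fieldType) (N : nat).
Local Notation V := 'rV[k]_N.

Record hopf_data := HopfData {
  hmulc : 'I_N -> 'I_N -> V;
  hunit : V;
  hcomulc : 'I_N -> 'M[k]_N;
  hcounitc : 'I_N -> k;
  hantic : 'I_N -> V }.

Definition bvec (i : 'I_N) : V := delta_mx 0 i.

Definition tens (u v : V) : 'M[k]_N := u^T *m v.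

Variable H : hopf_data.

Definition hmul (u v : V) : V :=
  \sum_(i < N) \sum_(j < N) (u 0 i * v 0 j) *: hmulc H i j.
Definition comul (u : V) : 'M[k]_N := \sum_(i < N) u 0 i *: hcomulc H i.
Definition counit (u : V) : k := \sum_(i < N) u 0 i * hcounitc H i.
Definition anti (u : V) : V := \sum_(i < N) u 0 i *: hantic H i.

Definition tmul (M M' : 'M[k]_N) : 'M[k]_N :=
  \sum_(i < N) \sum_(j < N) \sum_(i' < N) \sum_(j' < N)
     (M i j * M' i' j') *: tens (hmul (bvec i) (bvec i')) (hmul (bvec j) (bvec j')).

Definition is_hopf : Prop :=
  (forall u v w, hmul (hmul u v) w = hmul u (hmul v w)) /\
      (forall u, hmul (hunit H) u = u /\ hmul u (hunit H) = u) /\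
      (forall u (i j l : 'I_N),
          \sum_(p < N) comul u p l * comul (bvec p) i j
        = \sum_(q < N) comul u i q * comul (bvec q) j l) /\
      (forall u (i : 'I_N),
          \sum_(p < N) comul u p i * counit (bvec p) = u 0 i
       /\ \sum_(q < N) comul u i q * counit (bvec q) = u 0 i) /\
      (forall u v, comul (hmul u v) = tmul (comul u) (comul v)
                   /\ counit (hmul u v) = counit u * counit v) /\
      (comul (hunit H) = tens (hunit H) (hunit H) /\ counit (hunit H) = 1) /\
      (forall u,
          \sum_(i < N) \sum_(j < N) comul u i j *: hmul (anti (bvec i)) (bvec j)
            = counit u *: hunit H
       /\ \sum_(i < N) \sum_(j < N) comul u i j *: hmul (bvec i) (anti (bvec j))
            = counit u *: hunit H).

Definition cocommutative : Prop := forall u, (comul u)^T = comul u.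

Definition hprod (s : seq V) : V := foldr hmul (hunit H) s.

(* semisimple (as an algebra): the only nilpotent two-sided ideal is 0,
   i.e. the Jacobson radical vanishes *)
Definition two_sided_ideal (I : {vspace V}) : Prop :=
  forall x y, y \in I -> hmul x y \in I /\ hmul y x \in I.
Definition nilpotent_ideal (I : {vspace V}) : Prop :=
  exists m : nat, forall s : seq V, size s = m.+1 -> all (fun x => x \in I) s ->
    hprod s = 0.
Definition semisimple : Prop :=
  forall I : {vspace V}, two_sided_ideal I -> nilpotent_ideal I -> I = 0%VS.

Definition grouplike (g : V) : Prop := comul g = tens g g /\ counit g = 1.

(* d^2 linearly independent elements forming a matrix coalgebra basis
   (the matrix coefficients of a simple d-dimensional comodule) *)
Definition matcoalg (d : nat) (e : 'I_d -> 'I_d -> V) : Prop :=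
  [/\ free [seq e p.1 p.2 | p <- enum {: 'I_d * 'I_d}],
      (forall i j, comul (e i j) = \sum_(l < d) tens (e i l) (e l j)) &
      (forall i j, counit (e i j) = (i == j)%:R)].

Definition irr_char (d : nat) (chi : V) : Prop :=
  exists e : 'I_d -> 'I_d -> V, matcoalg e /\ chi = \sum_(i < d) e i i.

End Hopf.

(* [c] = 1 in H^2(A, k^x) (trivial action) *)
Definition trivial_class (k : fieldType) (A : finGroupType) (c : A -> A -> k) : Prop :=
  exists mu : A -> k, (forall g, mu g != 0) /\
    forall g h, c g h = mu g * mu h / mu (g * h)%g.

(* A grouplike element g of k^Gammahat #_sigma^tau kF lies in a single fibre
   k^Gammahat # x, and writing g = sum_s mu_s e_s # x, the equation
   Delta g = g (x) g reads mu_(st) tau_x(s, t) = mu_s mu_t, so [tau_x] = 1.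
   The fibre map g |-> x is multiplicative on G, and its kernel is Gamma because
   the fibre over 1 spans kGamma.  Conversely, Gamma fixes the character chi_l of
   each simple subcoalgebra C_l = M_d(k), so chi_l lies in the fibre over 1 of
   k^Gammahat # F; for y in its support, contracting Delta chi_l shows that the
   fibre over y and C_l span each other.  Hence |Gammahat| = d^2, and a
   trivialization of tau_y would produce a grouplike element of M_d(k), which
   does not exist for d > 1.  Distinct l give distinct y, so at least n of the
   2n classes [tau_x] are nontrivial, whereas G, of dimension d^2 n, lies in the
   fibres over its image.  So the image of G is exactly F_0 and |F_0| = n. *)

From HB Require Import structures.
From mathcomp Require Import all_boot all_order all_algebra all_fingroup.
From mathcomp Require Import boolp ring.
Set Implicit Arguments. Unset Strict Implicit. Unset Printing Implicit Defensive.
Import GRing.Theory.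
Local Open Scope ring_scope.

Lemma sum_delta (V : nmodType) (I : finType) (F : I -> V) a :
  \sum_i (if i == a then F i else 0) = F a.
Proof. by rewrite -big_mkcond big_pred1_eq. Qed.

Section FreeFamilies.
Variables (k : fieldType) (N : nat).
Local Notation V := 'rV[k]_N.

Lemma free_size_leq_span (X Y : seq V) :
  free X -> {subset X <= <<Y>>%VS} -> (size X <= size Y)%N.
Proof.
move=> fX sXY; rewrite -(eqP fX); apply: leq_trans (dim_span Y).
by apply: dimvS; apply/span_subvP.
Qed.

Lemma sub_free (X Y : seq V) : free Y -> uniq X -> {subset X <= Y} -> free X.
Proof.
move=> fY uX sXY; have uYX := filter_uniq (mem X) (free_uniq fY).
rewrite -(perm_free (uniq_perm uYX uX _)) ?filter_free // => x.
by rewrite mem_filter; apply/andP/idP => [[]|xX] //; split=> //; exact: sXY.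
Qed.

Lemma free_cat_span_cap (X Y : seq V) v :
  free (X ++ Y) -> v \in <<X>>%VS -> v \in <<Y>>%VS -> v = 0.
Proof.
rewrite cat_free => /and3P[_ _ /directv_addP dXY] vX vY.
by apply/eqP; rewrite -memv0 -dXY memv_cap vX vY.
Qed.

Lemma free_mem_span_filter (X : seq V) (P : pred V) x :
  free X -> x \in X -> x \in <<filter P X>>%VS -> P x.
Proof.
move=> fX xX xP; apply/negPn/negP => nPx.
have fPC : free (filter P X ++ filter (predC P) X).
  by rewrite (perm_free (etrans (perm_filterC P X _) (perm_refl X))).
have xC : x \in filter (predC P) X by rewrite mem_filter /= nPx.
by move: (free_not0 fX xX); rewrite (free_cat_span_cap fPC xP (memv_span xC)) eqxx.
Qed.

Section Family.
Variables (I : finType) (u : I -> V).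
Hypothesis fu : free (codom u).

Lemma free_codom_inj : injective u.
Proof. by apply/injectiveP; exact: free_uniq fu. Qed.

Lemma free_codom_dual i : {c : 'cV[k]_N | forall j, (u j *m c) 0 0 = (j == i)%:R}.
Proof.
pose delta_i := [seq ((x == u i)%:R : k^o) | x <- codom u].
have [f /(_ fu)] := @linear_of_free _ _ k^o (codom u) delta_i.
rewrite size_map => /(_ erefl) fm.
exists (\col_m f (delta_mx 0 m)) => j.
have -> : (j == i)%:R = f (u j).
  have uj : u j \in codom u by exact: codom_f.
  have := congr1 (nth 0 ^~ (index (u j) (codom u))) fm.
  by rewrite !(nth_map 0) ?index_mem // nth_index // (inj_eq free_codom_inj).
rewrite {2}(row_sum_delta (u j)) linear_sum /= mxE; apply: eq_bigr => m _.
by rewrite linearZ /= mxE.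
Qed.

Definition dualv i := sval (free_codom_dual i).

Lemma dualvE i j : (u j *m dualv i) 0 0 = (j == i)%:R.
Proof. exact: (svalP (free_codom_dual i)). Qed.

Lemma dualv_sum (F : I -> k) i : ((\sum_j F j *: u j) *m dualv i) 0 0 = F i.
Proof.
rewrite mulmx_suml summxE -[RHS](sum_delta (fun j => F j)); apply: eq_bigr => j _.
by rewrite -scalemxAl mxE dualvE; case: eqP; rewrite ?mulr1 ?mulr0.
Qed.

Lemma codom_span_expand v :
  v \in <<codom u>>%VS -> v = \sum_i (v *m dualv i) 0 0 *: u i.
Proof.
case/(free_span fu) => c -> _; rewrite big_map big_enum /=.
by apply: eq_bigr => i _; rewrite dualv_sum.
Qed.

End Family.

End FreeFamilies.

Section Tensors.
Variables (k : fieldType) (N : nat).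
Local Notation V := 'rV[k]_N.

Definition tcoef (c c' : 'cV[k]_N) (M : 'M[k]_N) := (c^T *m M *m c') 0 0.

Lemma tens_lcontract (c : 'cV[k]_N) (u v : V) : c^T *m tens u v = (u *m c) 0 0 *: v.
Proof.
by rewrite /tens mulmxA -trmx_mul {1}(mx11_scalar (u *m c)) tr_scalar_mx mul_scalar_mx.
Qed.

Lemma tens_rcontract (c : 'cV[k]_N) (u v : V) : (tens u v *m c)^T = (v *m c) 0 0 *: u.
Proof.
by rewrite /tens -mulmxA {1}(mx11_scalar (v *m c)) mul_mx_scalar linearZ /= trmxK.
Qed.

Lemma tcoef_tens c c' u v : tcoef c c' (tens u v) = (u *m c) 0 0 * (v *m c') 0 0.
Proof. by rewrite /tcoef tens_lcontract -scalemxAl mxE. Qed.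

Lemma tcoef_sum c c' J (r : seq J) (P : pred J) (F : J -> 'M[k]_N) :
  tcoef c c' (\sum_(j <- r | P j) F j) = \sum_(j <- r | P j) tcoef c c' (F j).
Proof. by rewrite /tcoef mulmx_sumr mulmx_suml summxE. Qed.

Lemma tcoefZ c c' a M : tcoef c c' (a *: M) = a * tcoef c c' M.
Proof. by rewrite /tcoef -scalemxAr -scalemxAl mxE. Qed.

Lemma tens_suml J (r : seq J) (P : pred J) (F : J -> V) v :
  tens (\sum_(j <- r | P j) F j) v = \sum_(j <- r | P j) tens (F j) v.
Proof. by rewrite /tens linear_sum /= mulmx_suml. Qed.

Lemma tens_sumr J (r : seq J) (P : pred J) (F : J -> V) v :
  tens v (\sum_(j <- r | P j) F j) = \sum_(j <- r | P j) tens v (F j).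
Proof. by rewrite /tens mulmx_sumr. Qed.

Lemma tensZl a (u v : V) : tens (a *: u) v = a *: tens u v.
Proof. by rewrite /tens linearZ /= scalemxAl. Qed.

Lemma tensZr a (u v : V) : tens u (a *: v) = a *: tens u v.
Proof. by rewrite /tens scalemxAr. Qed.

End Tensors.

Section HopfLinearity.
Variables (k : fieldType) (N : nat) (H : hopf_data k N).
Local Notation V := 'rV[k]_N.

Fact comul_is_semilinear : semilinear (comul H).
Proof.
split=> [a u|u v]; rewrite /comul ?scaler_sumr -?big_split; apply: eq_bigr => i _;
  by rewrite mxE (scalerA, scalerDl).
Qed.
HB.instance Definition _ :=
  GRing.isSemilinear.Build k V 'M[k]_N _ (comul H) comul_is_semilinear.

Fact counit_is_semilinear : semilinear_for *%R (counit H).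
Proof.
split=> [a u|u v]; rewrite /counit ?mulr_sumr -?big_split; apply: eq_bigr => i _;
  by rewrite mxE (mulrA, mulrDl).
Qed.
HB.instance Definition _ :=
  GRing.isSemilinear.Build k V k _ (counit H) counit_is_semilinear.

Fact hmul_is_semilinear w : semilinear (hmul H w).
Proof.
split=> [a u|u v]; rewrite /hmul ?scaler_sumr -?big_split; apply: eq_bigr => i _;
  rewrite ?scaler_sumr -?big_split; apply: eq_bigr => j _;
  by rewrite mxE (mulrCA, mulrDr) (scalerA, scalerDl).
Qed.
HB.instance Definition _ w :=
  GRing.isSemilinear.Build k V V _ (hmul H w) (hmul_is_semilinear w).

Definition hmulr w u := hmul H u w.

Fact hmulr_is_semilinear w : semilinear (hmulr w).
Proof.
split=> [a u|u v]; rewrite /hmulr /hmul ?scaler_sumr -?big_split; apply: eq_bigr => i _;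
  rewrite ?scaler_sumr -?big_split; apply: eq_bigr => j _;
  by rewrite mxE ?scalerA ?mulrA // mulrDl scalerDl.
Qed.
HB.instance Definition _ w :=
  GRing.isSemilinear.Build k V V _ (hmulr w) (hmulr_is_semilinear w).

Lemma comulZ a u : comul H (a *: u) = a *: comul H u.
Proof. exact: linearZ. Qed.

Lemma comul_sum I (r : seq I) (P : pred I) (F : I -> V) :
  comul H (\sum_(i <- r | P i) F i) = \sum_(i <- r | P i) comul H (F i).
Proof. exact: linear_sum. Qed.

Lemma counitZ a u : counit H (a *: u) = a * counit H u.
Proof. exact: linearZ. Qed.

Lemma counit_sum I (r : seq I) (P : pred I) (F : I -> V) :
  counit H (\sum_(i <- r | P i) F i) = \sum_(i <- r | P i) counit H (F i).
Proof. exact: linear_sum. Qed.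

Lemma hmulZr a u w : hmul H w (a *: u) = a *: hmul H w u.
Proof. exact: linearZ. Qed.

Lemma hmul_sumr I (r : seq I) (P : pred I) (F : I -> V) w :
  hmul H w (\sum_(i <- r | P i) F i) = \sum_(i <- r | P i) hmul H w (F i).
Proof. exact: linear_sum. Qed.

Lemma hmulZl a u w : hmul H (a *: u) w = a *: hmul H u w.
Proof. by rewrite -[LHS]/(hmulr w _) linearZ. Qed.

Lemma hmul_suml I (r : seq I) (P : pred I) (F : I -> V) w :
  hmul H (\sum_(i <- r | P i) F i) w = \sum_(i <- r | P i) hmul H (F i) w.
Proof. by rewrite -[LHS]/(hmulr w _) linear_sum. Qed.

End HopfLinearity.

Section MatrixCoalgebra.
Variables (k : fieldType) (N : nat) (H : hopf_data k N) (d : nat).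
Variable e : 'I_d -> 'I_d -> 'rV[k]_N.
Hypothesis he : matcoalg H e.
Local Notation ep := (fun p : 'I_d * 'I_d => e p.1 p.2).

Lemma matcoalg_free : free (codom ep).
Proof. by case: he. Qed.

Let edual := dualv matcoalg_free.

Lemma matcoalg_lcontract p i q :
  (edual (i, q))^T *m comul H (ep p) = (p.1 == i)%:R *: e q p.2.
Proof.
case: he => _ hc _; rewrite hc mulmx_sumr -[RHS](sum_delta (fun l => _ *: e l p.2)).
apply: eq_bigr => l _; rewrite tens_lcontract (dualvE _ _ (p.1, l)) xpair_eqE.
by case: (l =P q) => [->|]; rewrite ?andbT ?andbF ?scale0r.
Qed.

Lemma matcoalg_rcontract p r j :
  (comul H (ep p) *m edual (r, j))^T = (p.2 == j)%:R *: e p.1 r.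
Proof.
case: he => _ hc _; rewrite hc mulmx_suml linear_sum /=.
rewrite -[RHS](sum_delta (fun l => _ *: e p.1 l)); apply: eq_bigr => l _.
rewrite tens_rcontract (dualvE _ _ (l, p.2)) xpair_eqE.
by case: (l =P r) => [->|]; rewrite ?andbF ?scale0r // eqxx.
Qed.

Lemma matcoalg_tcoef_comul (a : 'I_d * 'I_d -> k) i j i' j' :
  tcoef (edual (i, j)) (edual (i', j')) (comul H (\sum_p a p *: ep p))
    = (j == i')%:R * a (i, j').
Proof.
rewrite comul_sum tcoef_sum -[RHS](sum_delta (fun p => (j == i')%:R * a p)).
apply: eq_bigr => -[p1 p2] _; rewrite comulZ tcoefZ /tcoef matcoalg_lcontract.
rewrite -scalemxAl mxE (dualvE _ _ (j, p2)) !xpair_eqE /=.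
by case: (p1 == i); case: (j == i'); case: (p2 == j');
  rewrite /= ?mulr1 ?mulr0 ?mul1r ?mul0r.
Qed.

Lemma matcoalg_grouplike_eq0 g : (1 < d)%N ->
  g \in <<codom ep>>%VS -> comul H g = tens g g -> g = 0.
Proof.
move=> hd gE cg; pose a p := (g *m edual p) 0 0.
have def_g : g = \sum_p a p *: ep p := codom_span_expand matcoalg_free gE.
have rel i j i' j' : a (i, j) * a (i', j') = (j == i')%:R * a (i, j').
  rewrite -(matcoalg_tcoef_comul a) -def_g cg tcoef_tens.
  by rewrite def_g !(dualv_sum matcoalg_free).
(* [rel] says that the [a]s multiply like matrix units, so two distinct
   indices [o0], [o1] force [a (i, m) ^+ 2 = 0]. *)
pose o0 : 'I_d := Ordinal (ltnW hd); pose o1 : 'I_d := Ordinal hd.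
have a0 p : a p = 0.
  case: p => i m; have := rel i o0 o0 m; have := rel i o1 o1 m.
  have := rel i o0 o1 m; rewrite !eqxx !mul1r [o0 == o1]/= mul0r => r01 r1 r0.
  have : a (i, m) * a (i, m) = (a (i, o0) * a (o1, m)) * (a (o0, m) * a (i, o1)).
    by rewrite -{1}r0 -r1; ring.
  by rewrite r01 mul0r => /eqP; rewrite mulf_eq0 orbb => /eqP.
by rewrite def_g big1 // => p _; rewrite a0 scale0r.
Qed.

(* The first hypothesis says that [W] is a subcoalgebra. *)
Lemma matcoalg_simple (W : {vspace 'rV[k]_N}) v :
  (forall c w, w \in W -> c^T *m comul H w \in W /\ (comul H w *m c)^T \in W) ->
  v \in <<codom ep>>%VS -> v \in W -> v != 0 -> forall q r, e q r \in W.
Proof.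
move=> clW vE vW nz_v q r; pose a p := (v *m edual p) 0 0.
have def_v : v = \sum_p a p *: ep p := codom_span_expand matcoalg_free vE.
have [[i j] aij] : exists p, a p != 0.
  apply/existsP; apply: contraR nz_v; rewrite negb_exists => /forallP a0.
  by rewrite def_v big1 // => p _; rewrite (eqP (negbNE (a0 p))) scale0r.
have def_w : (edual (i, q))^T *m comul H v = \sum_p (a p * (p.1 == i)%:R) *: e q p.2.
  rewrite def_v comul_sum mulmx_sumr; apply: eq_bigr => p _.
  by rewrite comulZ -scalemxAr matcoalg_lcontract scalerA.
have := (clW (edual (r, j)) _ (clW (edual (i, q)) v vW).1).2.
rewrite def_w comul_sum mulmx_suml linear_sum /=.
rewrite (eq_bigr (fun p => (if p == (i, j) then a p else 0) *: e q r)); last first.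
  move=> [p1 p2] _; rewrite comulZ -scalemxAl linearZ /= (matcoalg_rcontract (q, p2)).
  rewrite scalerA xpair_eqE /=.
  by case: (p1 == i); case: (p2 == j); rewrite /= ?mulr1 ?mulr0.
rewrite -scaler_suml sum_delta => /(rpredZ (a (i, j))^-1).
by rewrite scalerA mulVf ?scale1r.
Qed.

Lemma matcoalg_trace_neq0 : (0 < d)%N -> \sum_(i < d) e i i != 0.
Proof.
move=> d_gt0; pose i0 : 'I_d := Ordinal d_gt0.
apply/negP => /eqP/(congr1 (fun v => (v *m edual (i0, i0)) 0 0)).
rewrite mul0mx [X in _ = X]mxE mulmx_suml summxE.
rewrite (eq_bigr (fun i => if i == i0 then 1 else 0)) => [|i _].
  by rewrite sum_delta => /eqP; rewrite oner_eq0.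
by rewrite (dualvE _ _ (i, i)) xpair_eqE andbb; case: eqP.
Qed.

End MatrixCoalgebra.

Section BicrossedProduct.
Variables (k : fieldType) (N : nat) (H : hopf_data k N).
Variables (sT fT : finGroupType) (tau : fT -> sT -> sT -> k) (b : sT -> fT -> 'rV[k]_N).
Local Notation V := 'rV[k]_N.
Local Notation bp := (fun p : sT * fT => b p.1 p.2).
Hypothesis hbfree : free (codom bp).
Hypothesis hbcard : (#|sT| * #|fT|)%N = N.
Hypothesis htau : forall x s t, tau x s t != 0.
Hypothesis hbcomul : forall s x, comul H (b s x)
  = \sum_(p : sT * sT | (p.1 * p.2)%g == s) tau x p.1 p.2 *: tens (b p.1 x) (b p.2 x).
Hypothesis hbcounit : forall s x, counit H (b s x) = (s == 1%g)%:R.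

Let bdual := dualv hbfree.
Definition bcoef p (v : V) := (v *m bdual p) 0 0.

Fact bcoef_is_semilinear p : semilinear_for *%R (bcoef p).
Proof.
by split=> [a u|u v]; rewrite /bcoef ?mulmxDl -?scalemxAl mxE.
Qed.
HB.instance Definition _ p :=
  GRing.isSemilinear.Build k V k _ (bcoef p) (bcoef_is_semilinear p).

Lemma bcoefZ p a v : bcoef p (a *: v) = a * bcoef p v.
Proof. exact: linearZ. Qed.

Lemma bcoef_sum p I (r : seq I) (P : pred I) (F : I -> V) :
  bcoef p (\sum_(i <- r | P i) F i) = \sum_(i <- r | P i) bcoef p (F i).
Proof. exact: linear_sum. Qed.

Lemma bcoef_basis s x p : bcoef p (b s x) = ((s, x) == p)%:R.
Proof. exact: (dualvE _ _ (s, x)). Qed.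

Lemma basis_expand v : v = \sum_p bcoef p v *: bp p.
Proof.
apply: (codom_span_expand hbfree).
suff -> : <<codom bp>>%VS = fullv by rewrite memvf.
apply/eqP; rewrite eqEdim subvf dimvf (eqP hbfree) size_codom card_prod hbcard.
by rewrite /= dim_matrix mul1r.
Qed.

Lemma basis_expand2 v : v = \sum_s \sum_x bcoef (s, x) v *: b s x.
Proof. by rewrite pair_bigA {1}(basis_expand v); apply: eq_bigr => -[s x]. Qed.

Lemma basis_neq0 s x : b s x != 0.
Proof. exact: (free_not0 hbfree (codom_f bp (s, x))). Qed.

Lemma tcoef_comul_basis s x p1 p2 q1 q2 :
  tcoef (bdual (p1, p2)) (bdual (q1, q2)) (comul H (b s x))
  = if [&& p2 == x, q2 == x & (p1 * q1)%g == s] then tau x p1 q1 else 0.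
Proof.
rewrite hbcomul tcoef_sum big_mkcond (bigD1 (p1, q1)) //= big1 ?addr0 => [|w nw].
  rewrite tcoefZ tcoef_tens !(dualvE _ _ (_, x)) !xpair_eqE !eqxx /= !(eq_sym x).
  by case: ((p1 * q1)%g == s); case: (p2 == x); case: (q2 == x); rewrite /= ?mulr1 ?mulr0.
case: ifP => // _; rewrite tcoefZ tcoef_tens !(dualvE _ _ (_, x)) !xpair_eqE.
case: w nw => w1 w2 /=; rewrite xpair_eqE negb_and => /orP[]/negbTE->;
  by rewrite /= ?mulr0n ?mul0r ?mulr0.
Qed.

Definition fiber y := codom (fun s => b s y).

Lemma fiber_free y : free (fiber y).
Proof.
apply: (sub_free hbfree).
  by apply/injectiveP => s t e; case: (free_codom_inj hbfree (e : bp (s, y) = bp (t, y))).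
by move=> _ /codomP[s ->]; exact: (codom_f bp (s, y)).
Qed.

Lemma size_fiber y : size (fiber y) = #|sT|.
Proof. exact: size_codom. Qed.

Lemma fiber_span_comul y c v : v \in <<fiber y>>%VS ->
  c^T *m comul H v \in <<fiber y>>%VS /\ (comul H v *m c)^T \in <<fiber y>>%VS.
Proof.
move/(codom_span_expand (fiber_free y)) => ->; rewrite comul_sum.
split; [rewrite mulmx_sumr | rewrite mulmx_suml linear_sum];
  apply: rpred_sum => s _; rewrite comulZ hbcomul.
  rewrite -scalemxAr mulmx_sumr; apply: rpredZ; apply: rpred_sum => w _.
  rewrite -scalemxAr tens_lcontract; apply: rpredZ; apply: rpredZ.
  exact/memv_span/codom_f.
rewrite -scalemxAl mulmx_suml linearZ linear_sum /=; apply: rpredZ.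
apply: rpred_sum => w _; rewrite -scalemxAl linearZ /= tens_rcontract.
by apply: rpredZ; apply: rpredZ; exact/memv_span/codom_f.
Qed.

Lemma lcontract_comul_basis p y0 s y :
  (bdual (p, y0))^T *m comul H (b s y)
    = if y == y0 then tau y p (p^-1 * s)%g *: b (p^-1 * s)%g y else 0.
Proof.
rewrite hbcomul mulmx_sumr big_mkcond (bigD1 (p, p^-1 * s)%g) /= ?mulKVg ?eqxx //.
rewrite [X in _ + X]big1 ?addr0 => [|[w1 w2] /= nw].
  rewrite -scalemxAr tens_lcontract (dualvE _ _ (p, y)) xpair_eqE eqxx /=.
  by case: (y == y0); rewrite ?scale1r ?scale0r ?scaler0.
case: eqP => // ew; rewrite -scalemxAr tens_lcontract (dualvE _ _ (w1, y)) xpair_eqE.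
case: (w1 =P p) => [e1|]; last by rewrite scale0r scaler0.
by move: nw; rewrite -ew e1 mulKg eqxx.
Qed.

Lemma trivial_class_fiber_grouplike y (mu : sT -> k) :
  (forall s t, tau y s t = mu s * mu t / mu (s * t)%g) -> (forall s, mu s != 0) ->
  let g := \sum_s mu s *: b s y in comul H g = tens g g.
Proof.
move=> hmu mu0 g; rewrite /g comul_sum tens_suml.
rewrite [RHS](eq_bigr (fun s => \sum_t (mu s * mu t) *: tens (b s y) (b t y))) => [|s _].
  rewrite [RHS]pair_bigA [RHS](partition_big (fun w : sT * sT => (w.1 * w.2)%g) xpredT) //=.
  apply: eq_bigr => s _; rewrite comulZ hbcomul scaler_sumr.
  by apply: eq_bigr => w /eqP <-; rewrite scalerA hmu mulrC divfK.
by rewrite tens_sumr; apply: eq_bigr => t _; rewrite tensZl tensZr scalerA.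
Qed.

(* The fibre of a grouplike element; [1] is a junk value. *)
Definition gdeg v := if [pick x | bcoef (1%g, x) v != 0] is Some x then x else 1%g.

Section Grouplike.
Variable g : V.
Hypothesis gg : grouplike H g.

Lemma grouplike_coefM p1 p2 q1 q2 : bcoef (p1, p2) g * bcoef (q1, q2) g
  = if p2 == q2 then bcoef ((p1 * q1)%g, p2) g * tau p2 p1 q1 else 0.
Proof.
have := congr1 (tcoef (bdual (p1, p2)) (bdual (q1, q2))) gg.1.
rewrite tcoef_tens => <-.
rewrite {1}(basis_expand2 g) comul_sum tcoef_sum (bigD1 (p1 * q1)%g) //=.
rewrite [X in _ + X]big1 ?addr0 => [|s ns]; last first.
  rewrite comul_sum tcoef_sum big1 // => x _.
  by rewrite comulZ tcoefZ tcoef_comul_basis (eq_sym _ s) (negbTE ns) !andbF mulr0.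
rewrite comul_sum tcoef_sum (bigD1 p2) //= [X in _ + X]big1 ?addr0 => [|x nx].
  rewrite comulZ tcoefZ tcoef_comul_basis !eqxx andbT (eq_sym q2).
  by case: (p2 == q2); rewrite ?mulr0.
by rewrite comulZ tcoefZ tcoef_comul_basis (eq_sym p2) (negbTE nx) mulr0.
Qed.

Lemma grouplike_coef1_sum : \sum_x bcoef (1%g, x) g = 1.
Proof.
rewrite -gg.2 [in RHS](basis_expand2 g) counit_sum [RHS](bigD1 1%g) //=.
rewrite [X in _ + X]big1 ?addr0 => [|s ns].
  by rewrite counit_sum; apply: eq_bigr => x _; rewrite counitZ hbcounit eqxx mulr1.
by rewrite counit_sum big1 // => x _; rewrite counitZ hbcounit (negbTE ns) mulr0.
Qed.

Lemma grouplike_coef1_gdeg_neq0 : bcoef (1%g, gdeg g) g != 0.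
Proof.
rewrite /gdeg; case: pickP => [x //|none].
move: grouplike_coef1_sum; rewrite big1 => [/eqP|x _]; first by rewrite eq_sym oner_eq0.
by have /negbFE/eqP := none x.
Qed.

Lemma grouplike_coef_off_gdeg s y : y != gdeg g -> bcoef (s, y) g = 0.
Proof.
move=> ny; have := grouplike_coefM s y 1%g (gdeg g); rewrite (negbTE ny).
by move/eqP; rewrite mulf_eq0 (negbTE grouplike_coef1_gdeg_neq0) orbF => /eqP.
Qed.

Lemma grouplike_coef1_gdeg : bcoef (1%g, gdeg g) g = 1.
Proof.
rewrite -grouplike_coef1_sum (bigD1 (gdeg g)) //= big1 ?addr0 // => y.
exact: grouplike_coef_off_gdeg.
Qed.

Lemma grouplike_coef_gdeg_neq0 s : bcoef (s, gdeg g) g != 0.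
Proof.
have := grouplike_coefM s (gdeg g) s^-1%g (gdeg g).
rewrite eqxx mulgV grouplike_coef1_gdeg mul1r => e.
by apply: contraNneq (htau (gdeg g) s s^-1%g) => c0; rewrite -e c0 mul0r.
Qed.

Lemma grouplike_expand : g = \sum_s bcoef (s, gdeg g) g *: b s (gdeg g).
Proof.
rewrite {1}(basis_expand2 g); apply: eq_bigr => s _.
rewrite (bigD1 (gdeg g)) //= big1 ?addr0 // => y ny.
by rewrite grouplike_coef_off_gdeg // scale0r.
Qed.

Lemma grouplike_tau_trivial : trivial_class (tau (gdeg g)).
Proof.
exists (fun s => bcoef (s, gdeg g) g); split=> [|s t]; first exact: grouplike_coef_gdeg_neq0.
by rewrite /= grouplike_coefM eqxx mulrAC divff ?mul1r ?grouplike_coef_gdeg_neq0.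
Qed.

End Grouplike.

Variables (ract : sT -> fT -> sT) (sigma : sT -> fT -> fT -> k).
Hypothesis hbmul : forall s t x y, hmul H (b s x) (b t y)
  = if ract s x == t then sigma s x y *: b s (x * y)%g else 0.

Lemma bcoef_hmul_basis s t x y u z :
  z != (x * y)%g -> bcoef (u, z) (hmul H (b s x) (b t y)) = 0.
Proof.
move=> nz; rewrite hbmul; case: ifP => _; rewrite ?raddf0 // bcoefZ bcoef_basis.
by rewrite xpair_eqE (eq_sym _ z) (negbTE nz) andbF mulr0.
Qed.

Lemma gdegM g h : grouplike H g -> grouplike H h -> grouplike H (hmul H g h) ->
  gdeg (hmul H g h) = (gdeg g * gdeg h)%g.
Proof.
move=> gg gh ggh; apply/eqP; apply: contraT => ne.
move: (grouplike_coef1_gdeg ggh); move: (gdeg _) ne => z nz.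
rewrite (grouplike_expand gg) (grouplike_expand gh) hmul_suml bcoef_sum big1 => [|s _].
  by move/eqP; rewrite eq_sym oner_eq0.
rewrite hmulZl bcoefZ hmul_sumr bcoef_sum big1 ?mulr0 // => t _.
by rewrite hmulZr bcoefZ bcoef_hmul_basis ?mulr0.
Qed.

Hypothesis hunitl : forall u, hmul H (hunit H) u = u.
Hypothesis hsigma : forall s x y, sigma s x y != 0.
Hypothesis hbunit : hunit H = \sum_(s : sT) b s 1%g.

Lemma hmul_unit_basis s t y : hmul H (b s 1%g) (b t y) = if s == t then b s y else 0.
Proof.
have sigma_unit s' : (if ract s' 1%g == t then sigma s' 1%g y else 0) = (t == s')%:R.
  have := congr1 (bcoef (s', y)) (hunitl (b t y)).
  rewrite hbunit hmul_suml bcoef_sum bcoef_basis xpair_eqE eqxx andbT => <-.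
  rewrite (bigD1 s') //= big1 ?addr0 => [|s'' ns'']; rewrite hbmul mul1g;
    case: ifP => _; rewrite ?raddf0 // bcoefZ bcoef_basis xpair_eqE ?eqxx ?mulr1 //.
  by rewrite (negbTE ns'') mulr0.
have := sigma_unit s; rewrite hbmul mul1g; case: ifP => _ sig.
  case: (t =P s) sig => [-> ->|_ sig]; first by rewrite eqxx scale1r.
  by move: (hsigma s 1%g y); rewrite sig eqxx.
by case: (s =P t) => // st; move/eqP: sig; rewrite st eqxx eq_sym oner_eq0.
Qed.

Variables (G : seq 'rV[k]_N) (d n : nat).
Hypothesis hGg : forall g, g \in G -> grouplike H g.
Variable E : 'I_n -> 'I_d -> 'I_d -> 'rV[k]_N.
Hypothesis hE : forall l, matcoalg H (E l).
Hypothesis hGE : free (G ++ [seq E p.1 p.2.1 p.2.2 | p <- enum {: 'I_n * ('I_d * 'I_d)}]).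
Hypothesis hGamma : <<[seq b s 1%g | s <- enum sT]>>%VS
  = <<[seq g <- G | `[< forall chi, irr_char H d chi -> hmul H g chi = chi >]]>>%VS.

Local Notation El l := (codom (fun p : 'I_d * 'I_d => E l p.1 p.2)).

Definition Gamma := [seq g <- G | `[< forall chi, irr_char H d chi -> hmul H g chi = chi >]].

Lemma span_fiber1 : <<fiber 1%g>>%VS = <<Gamma>>%VS.
Proof. exact: hGamma. Qed.

Lemma free_Gamma : free Gamma.
Proof. exact/filter_free/(catl_free hGE). Qed.

Lemma Gamma_stab g chi : g \in Gamma -> irr_char H d chi -> hmul H g chi = chi.
Proof. by rewrite mem_filter => /andP[/asboolP stab _]; exact: stab. Qed.

Lemma Gamma_sub : {subset Gamma <= G}.
Proof. by move=> g; rewrite mem_filter => /andP[]. Qed.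

Lemma gdeg_eq1 g : g \in G -> gdeg g = 1%g <-> g \in Gamma.
Proof.
move=> gG; have gg := hGg gG; have fG : free G := catl_free hGE.
split=> [g1|gGam].
  have : g \in <<Gamma>>%VS.
    rewrite -span_fiber1 (grouplike_expand gg) g1.
    by apply: rpred_sum => s _; apply/rpredZ/memv_span/codom_f.
  by move/(free_mem_span_filter fG gG) => P; rewrite mem_filter P gG.
have : g \in <<fiber 1%g>>%VS by rewrite span_fiber1 memv_span.
move/(codom_span_expand (fiber_free 1%g)) => def_g.
apply/eqP; apply: contraT => ne; move: (grouplike_coef1_gdeg gg).
rewrite {2}def_g bcoef_sum big1 => [/eqP|s _]; first by rewrite eq_sym oner_eq0.
by rewrite bcoefZ bcoef_basis xpair_eqE (eq_sym 1%g) (negbTE ne) andbF mulr0.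
Qed.

Definition chi l := \sum_(i < d) E l i i.

Lemma chi_irr l : irr_char H d (chi l).
Proof. by exists (E l). Qed.

Lemma hmul_unit_basis_chi s l : hmul H (b s 1%g) (chi l) = (s == 1%g)%:R *: chi l.
Proof.
have : b s 1%g \in <<Gamma>>%VS by rewrite -span_fiber1; exact/memv_span/codom_f.
case/(free_span free_Gamma) => c def_b _.
have csum : \sum_(x <- Gamma) c x = (s == 1%g)%:R.
  rewrite -(hbcounit s 1%g) def_b counit_sum; apply: eq_big_seq => x xGam.
  by rewrite counitZ (hGg (Gamma_sub xGam)).2 mulr1.
rewrite def_b hmul_suml -csum scaler_suml; apply: eq_big_seq => x xGam.
by rewrite hmulZl (Gamma_stab xGam (chi_irr l)).
Qed.

Lemma chi_coef_off1 l s y : s != 1%g -> bcoef (s, y) (chi l) = 0.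
Proof.
move=> ns; have := congr1 (bcoef (s, y)) (hmul_unit_basis_chi s l).
rewrite bcoefZ (negbTE ns) mul0r => <-.
rewrite {2}(basis_expand (chi l)) hmul_sumr bcoef_sum (bigD1 (s, y)) //=.
rewrite hmulZr bcoefZ hmul_unit_basis eqxx bcoef_basis eqxx mulr1.
rewrite [X in _ + X]big1 ?addr0 // => -[t x] /= ne.
rewrite hmulZr bcoefZ hmul_unit_basis.
case: (s =P t) => [st|_]; last by rewrite raddf0 mulr0.
by move: ne; rewrite -st => /negbTE ne; rewrite bcoef_basis ne mulr0.
Qed.

Lemma chi_expand l : chi l = \sum_y bcoef (1%g, y) (chi l) *: b 1%g y.
Proof.
rewrite {1}(basis_expand2 (chi l)) (bigD1 1%g) //= [X in _ + X]big1 ?addr0 // => s ns.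
by apply: big1 => y _; rewrite chi_coef_off1 // scale0r.
Qed.

Lemma fiber_sub_span_E l y0 s :
  bcoef (1%g, y0) (chi l) != 0 -> b s y0 \in <<El l>>%VS.
Proof.
move=> c_neq0; have [_ hc _] := hE l.
have : (dualv hbfree (s^-1, y0)%g)^T *m comul H (chi l) \in <<El l>>%VS.
  rewrite /chi comul_sum mulmx_sumr; apply: rpred_sum => i _.
  rewrite hc mulmx_sumr; apply: rpred_sum => m _; rewrite tens_lcontract.
  exact/rpredZ/memv_span/(codom_f (fun p : 'I_d * 'I_d => E l p.1 p.2) (m, i)).
rewrite {1}(chi_expand l) comul_sum mulmx_sumr (bigD1 y0) //= [X in _ + X]big1 ?addr0.
  rewrite comulZ -scalemxAr lcontract_comul_basis eqxx invgK mulg1 scalerA.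
  move/(rpredZ (bcoef (1%g, y0) (chi l) * tau y0 s^-1%g s)^-1).
  by rewrite scalerA mulVf ?scale1r // mulf_neq0.
by move=> y ny; rewrite comulZ -scalemxAr lcontract_comul_basis (negbTE ny) scaler0.
Qed.

Lemma E_sub_span_fiber l y0 q r :
  bcoef (1%g, y0) (chi l) != 0 -> E l q r \in <<fiber y0>>%VS.
Proof.
move=> c_neq0; apply: (matcoalg_simple (hE l) _ (fiber_sub_span_E 1%g c_neq0)).
- by move=> c w; exact: fiber_span_comul.
- exact/memv_span/codom_f.
- exact: basis_neq0.
Qed.

Lemma card_sT_chi l y0 : bcoef (1%g, y0) (chi l) != 0 -> #|sT| = (d * d)%N.
Proof.
have size_El : size (El l) = (d * d)%N by rewrite size_codom card_prod card_ord.
move=> c_neq0; apply/eqP; rewrite eqn_leq -(size_fiber y0) -size_El.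
apply/andP; split; apply: free_size_leq_span.
- exact: fiber_free.
- by move=> _ /codomP[s ->]; exact: fiber_sub_span_E.
- exact: (matcoalg_free (hE l)).
- by move=> _ /codomP[[q r] ->]; exact: E_sub_span_fiber.
Qed.

Hypothesis hd : (1 < d)%N.

Definition chi_deg l := if [pick y | bcoef (1%g, y) (chi l) != 0] is Some y then y else 1%g.

Lemma chi_deg_coef l : bcoef (1%g, chi_deg l) (chi l) != 0.
Proof.
rewrite /chi_deg; case: pickP => [y //|none].
have := matcoalg_trace_neq0 (hE l) (ltnW hd); rewrite -/(chi l) (chi_expand l).
by rewrite big1 ?eqxx // => y _; rewrite (eqP (negbFE (none y))) scale0r.
Qed.

Lemma chi_deg_tau_nontrivial l : ~ trivial_class (tau (chi_deg l)).
Proof.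
case=> mu [mu0 hmu]; set y := chi_deg l.
have := trivial_class_fiber_grouplike hmu mu0; set g := \sum_s _ => cg.
have gE : g \in <<El l>>%VS.
  by apply: rpred_sum => s _; apply/rpredZ/fiber_sub_span_E/chi_deg_coef.
have g_coef : bcoef (1%g, y) g = mu 1%g.
  rewrite bcoef_sum (bigD1 1%g) //= [X in _ + X]big1 ?addr0 => [|s ns];
    rewrite bcoefZ bcoef_basis xpair_eqE ?eqxx ?mulr1 //.
  by rewrite (negbTE ns) mulr0.
move: (mu0 1%g); rewrite -g_coef (matcoalg_grouplike_eq0 (hE l) hd gE cg).
by rewrite raddf0 eqxx.
Qed.

Lemma free_E_cat l l' : l != l' -> free (El l ++ El l').
Proof.
move=> nl; have fE := catr_free hGE.
have Einj := free_codom_inj fE.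
apply: (sub_free fE).
  rewrite cat_uniq (free_uniq (matcoalg_free (hE l))) (free_uniq (matcoalg_free (hE l'))).
  rewrite andbT /=; apply/hasPn => _ /codomP[p ->]; apply/negP => /codomP[p' e].
  by case: (Einj (l', p) (l, p') e) => el _; rewrite el eqxx in nl.
move=> x; rewrite mem_cat => /orP[] /codomP[p ->].
  exact: (codom_f (fun j : 'I_n * ('I_d * 'I_d) => E j.1 j.2.1 j.2.2) (l, p)).
exact: (codom_f (fun j : 'I_n * ('I_d * 'I_d) => E j.1 j.2.1 j.2.2) (l', p)).
Qed.

Lemma chi_deg_inj : injective chi_deg.
Proof.
move=> l l' e; apply/eqP; apply: contraT => nl.
have v := fiber_sub_span_E 1%g (chi_deg_coef l).
have v' := fiber_sub_span_E 1%g (chi_deg_coef l'); rewrite -e in v'.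
by move: (basis_neq0 1%g (chi_deg l)); rewrite (free_cat_span_cap (free_E_cat nl) v v') eqxx.
Qed.

Hypothesis hG1 : hunit H \in G.
Hypothesis hGm : forall g h, g \in G -> h \in G -> hmul H g h \in G.
Hypothesis hidx : N = (2 * size G)%N.
Hypothesis hGsize : size G = (d ^ 2 * n)%N.

Definition trivial_classes := [set x : fT | `[< trivial_class (tau x) >]].

Lemma mem_trivial_classes x : x \in trivial_classes <-> trivial_class (tau x).
Proof. by rewrite inE; split=> /asboolP. Qed.

Lemma card_sT : #|sT| = (d * d)%N.
Proof.
have : (0 < size G)%N by case: (G) hG1.
rewrite hGsize muln_gt0 => /andP[_ n_gt0].
exact: (card_sT_chi (chi_deg_coef (Ordinal n_gt0))).
Qed.

Lemma card_fT : #|fT| = (2 * n)%N.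
Proof.
have dd_gt0 : (0 < d * d)%N by rewrite muln_gt0 (ltnW hd).
apply/eqP; rewrite -(eqn_pmul2l dd_gt0) -card_sT hbcard hidx hGsize.
by rewrite card_sT mulnn mulnCA.
Qed.

Lemma card_trivial_classes_le : (#|trivial_classes| <= n)%N.
Proof.
have : (n <= #|~: trivial_classes|)%N.
  rewrite -[n]card_ord -(card_imset _ chi_deg_inj); apply: subset_leq_card.
  apply/subsetP => _ /imsetP[l _ ->]; rewrite in_setC.
  by apply/negP => /mem_trivial_classes; exact: chi_deg_tau_nontrivial.
by rewrite -(leq_add2l #|trivial_classes|) cardsC card_fT mul2n -addnn leq_add2r.
Qed.

Lemma gdeg_image_sub : [set x in map gdeg G] \subset trivial_classes.
Proof.
apply/subsetP => x; rewrite inE => /mapP[g gG ->].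
exact/mem_trivial_classes/(grouplike_tau_trivial (hGg gG)).
Qed.

Lemma card_gdeg_image_ge : (n <= #|[set x in map gdeg G]|)%N.
Proof.
set FG := [set x in map gdeg G].
have dd_gt0 : (0 < d ^ 2)%N by rewrite expn_gt0 (ltnW hd).
rewrite -(leq_pmul2l dd_gt0) -hGsize -mulnn -card_sT -[X in (X * _)%N]cardsT -cardsX.
rewrite cardE -(size_map bp); apply: (free_size_leq_span (catl_free hGE)) => g gG.
rewrite (grouplike_expand (hGg gG)); apply: rpred_sum => s _.
apply/rpredZ/memv_span/mapP; exists (s, gdeg g) => //.
rewrite mem_enum in_setX !inE /=.
exact: map_f.
Qed.

Lemma gdeg_image : [set x in map gdeg G] = trivial_classes.
Proof.
apply/eqP; rewrite eqEcard gdeg_image_sub /=.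
exact: leq_trans card_trivial_classes_le card_gdeg_image_ge.
Qed.

Lemma gdeg_exact_sequence :
  [/\ {in G &, forall g h, gdeg (hmul H g h) = (gdeg g * gdeg h)%g},
      [set x in map gdeg G] = trivial_classes,
      {in G, forall g, gdeg g = 1%g <-> g \in Gamma} &
      #|trivial_classes| = n].
Proof.
split; first by move=> g h gG hG; apply: gdegM; apply: hGg => //; exact: hGm.
- exact: gdeg_image.
- exact: gdeg_eq1.
by apply/eqP; rewrite eqn_leq card_trivial_classes_le -gdeg_image card_gdeg_image_ge.
Qed.

End BicrossedProduct.

Theorem proposition5p4
  (* the base field: algebraically closed of characteristic 0 *)
  (k : closedFieldType) (hchar : [pchar k] =i pred0)
  (* H : a Hopf algebra of dimension N *)
  (N : nat) (H : hopf_data k N) (hH : is_hopf H)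
  (hss : semisimple H) (hnc : ~ cocommutative H)
  (* G : a subgroup of G(H) of index [H : kG] = 2 *)
  (G : seq 'rV[k]_N) (hGu : uniq G)
  (hGg : forall g, g \in G -> grouplike H g)
  (hG1 : hunit H \in G)
  (hGm : forall g h, g \in G -> h \in G -> hmul H g h \in G)
  (hGi : forall g, g \in G -> anti H g \in G)
  (hidx : N = (2 * size G)%N)
  (* the coalgebra decomposition H = kG (+) M_d(k)^n, d > 1, |G| = d^2 n *)
  (d n : nat) (hd : (1 < d)%N) (hGsize : size G = (d ^ 2 * n)%N)
  (hdec : exists E : 'I_n -> 'I_d -> 'I_d -> 'rV[k]_N,
      (forall l, matcoalg H (E l)) /\
      free (G ++ [seq E p.1 p.2.1 p.2.2 | p <- enum {: 'I_n * ('I_d * 'I_d)}]))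
  (* bicrossed product presentation H = k^{Gammahat} tau#sigma kF, given by
     the images b s x in H of the basis elements e_s # x *)
  (sT fT : finGroupType) (habel : abelian [set: sT])
  (ract : sT -> fT -> sT)
  (sigma : sT -> fT -> fT -> k) (tau : fT -> sT -> sT -> k)
  (hsigma : forall s x y, sigma s x y != 0)
  (htau : forall x g h, tau x g h != 0)
  (b : sT -> fT -> 'rV[k]_N)
  (hbasis : free [seq b p.1 p.2 | p <- enum {: sT * fT}]
            /\ (#|sT| * #|fT|)%N = N)
  (hbmul : forall s t x y, hmul H (b s x) (b t y)
             = if ract s x == t then sigma s x y *: b s (x * y)%g else 0)
  (hbunit : hunit H = \sum_(s : sT) b s 1%g)
  (hbcomul : forall s x, comul H (b s x)
             = \sum_(p : sT * sT | (p.1 * p.2)%g == s)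
                  tau x p.1 p.2 *: tens (b p.1 x) (b p.2 x))
  (hbcounit : forall s x, counit H (b s x) = (s == 1%g)%:R)
  (* k^{Gammahat} # 1 corresponds to kGamma, Gamma = common stabilizer in G
     (under left multiplication) of the irreducible characters of degree d *)
  (hGamma : <<[seq b s 1%g | s <- enum sT]>>%VS
            = <<[seq g <- G | `[< forall chi, irr_char H d chi -> hmul H g chi = chi >]]>>%VS) :
  let inGamma := fun g => g \in G /\ forall chi, irr_char H d chi -> hmul H g chi = chi in
  let F0 := [set x : fT | `[< trivial_class (tau x) >]] in
  (exists f : 'rV[k]_N -> fT,
      [/\ forall g h, g \in G -> h \in G -> f (hmul H g h) = (f g * f h)%g,
          forall g, g \in G -> f g \in F0,
          forall x, x \in F0 -> exists2 g, g \in G & f g = x &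
          forall g, g \in G -> (f g = 1%g <-> inGamma g)])
  /\ #|F0| = n.
Proof.
move=> inGamma F0; case: hdec => E [hE hGE]; case: hbasis => hbfree hbcard.
have hunitl u : hmul H (hunit H) u = u by case: hH => _ [/(_ u)[]].
have [gdegM gdeg_image gdeg_ker card_F0] := gdeg_exact_sequence hbfree hbcard htau
  hbcomul hbcounit hbmul hunitl hsigma hbunit hGg hE hGE hGamma hd hG1 hGm hidx hGsize.
have def_F0 : F0 = [set x in map (gdeg hbfree) G] by rewrite gdeg_image.
split=> //; exists (gdeg hbfree); split.
- exact: gdegM.
- by move=> g gG; rewrite def_F0 inE map_f.
- by move=> x; rewrite def_F0 inE => /mapP[g gG ->]; exists g.
- move=> g gG; rewrite gdeg_ker // mem_filter gG andbT /inGamma.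
  by split=> [/asboolP | [_ /asboolP]].
Qed.
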